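(* For $n\ge2$, let $b_n$ be the number of permutations in $\mathcal S_n$ that contain $(123,\emptyset,\{0,1\})$. Then $b_n=\frac12(n-1)!\,(n-2)$.
   Context: For $n\ge1$, $\mathcal S_n$ is the set of permutations $\pi=\pi_1\cdots\pi_n$ of $[n]$. A bi-vincular pattern of length $k$ is a triple $p=(\sigma,X,Y)$ with $\sigma\in\mathcal S_k$ and $X,Y\subseteq\{0,1,\dots,k\}$. A permutation $\pi\in\mathcal S_n$ contains $p$ if there are indices $1\le i_1<\dots<i_k\le n$ such that $(\pi_{i_1},\dots,\pi_{i_k})$ is order-isomorphic to $\sigma$ and, letting $j_1<\dots<j_k$ be the values $\pi_{i_1},\dots,\pi_{i_k}$ sorted increasingly and setting $i_0=j_0=0$, $i_{k+1}=j_{k+1}=n+1$, one has $i_{x+1}=i_x+1$ for all $x\in X$ and $j_{y+1}=j_y+1$ for all $y\in Y$. *)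

From mathcomp Require Import all_boot all_order all_fingroup.
Set Implicit Arguments. Unset Strict Implicit. Unset Printing Implicit Defensive.

(* Permutations of [n] are modelled as pi : 'S_n (permutations of 'I_n = {0..n-1});
   the paper's 1-based positions/values are obtained by adding 1.  *)

(* extended sequence  0 :: s ++ [:: n+1]  (sets i_0 = 0, i_{k+1} = n+1) *)
Definition ext_seq (n : nat) (s : seq nat) : seq nat := 0 :: rcons s n.+1.

Definition bivinc_occ (n k : nat) (pi : 'S_n) (sigma : 'S_k)
    (X Y : {set 'I_k.+1}) (f : 'I_k -> 'I_n) : bool :=
  let I := ext_seq n [seq (f a).+1 | a <- enum 'I_k] in
  let J := ext_seq n (sort leq [seq (pi (f a)).+1 | a <- enum 'I_k]) in
  [&& [forall a : 'I_k, forall b : 'I_k, (a < b) ==> (f a < f b)],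
      [forall a : 'I_k, forall b : 'I_k,
          (pi (f a) < pi (f b)) == (sigma a < sigma b)],
      [forall x in X, nth 0 I x.+1 == (nth 0 I x).+1] &
      [forall y in Y, nth 0 J y.+1 == (nth 0 J y).+1]].

Definition contains_bivinc (n k : nat) (pi : 'S_n) (sigma : 'S_k)
    (X Y : {set 'I_k.+1}) : bool :=
  [exists f : {ffun 'I_k -> 'I_n}, bivinc_occ pi sigma X Y f].

Definition pat123 : 'S_3 := 1.
Definition pat_Y : {set 'I_4} := [set (ord0 : 'I_4); (inord 1 : 'I_4)].

Definition b_count (n : nat) : nat :=
  #|[set pi : 'S_n | contains_bivinc pi pat123 set0 pat_Y]|.

From mathcomp Require Import all_boot all_order all_fingroup zify.

(* An occurrence of (123, {}, {0,1}) uses the two smallest values 1 and 2 of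
   the permutation, in increasing order, followed by some later entry.  Hence
   pi contains the pattern iff 1 precedes 2 and 2 is not the last entry.
   Exchanging the values 1 and 2 is a bijection between the permutations
   where 1 precedes 2 and those where 2 precedes 1, and together these are
   exactly the permutations not ending with 1 or 2, of which there are
   n! - 2 (n-1)!. *)

Lemma enum_ord3 : enum 'I_3 = [:: ord0; inord 1; inord 2].
Proof. by apply: (inj_map val_inj); rewrite enumT unlock /= val_ord_enum /= !inordK. Qed.

Section PrecedesNonlast.

Variable n : nat.
Implicit Types (pi : 'S_n.+1) (u v : 'I_n.+1).

Definition precedes_nonlast pi u v : bool :=
  (pi^-1)%g u < (pi^-1)%g v < n.

Lemma precedes_nonlast_asym pi u v :
  precedes_nonlast pi u v -> ~~ precedes_nonlast pi v u.
Proof. by rewrite /precedes_nonlast; lia. Qed.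

Lemma precedes_nonlast_total pi u v : u != v ->
  precedes_nonlast pi u v || precedes_nonlast pi v u
    = (pi ord_max != u) && (pi ord_max != v).
Proof.
move=> neq_uv.
have last_neq w : (pi ord_max != w) = ((pi^-1)%g w != n :> nat).
  by rewrite -[RHS]/((pi^-1)%g w != ord_max) (can2_eq (permK pi) (permKV pi)) eq_sym.
have pos_neq : (pi^-1)%g u != (pi^-1)%g v :> nat.
  by rewrite val_eqE (inj_eq (@perm_inj _ _)).
rewrite !last_neq /precedes_nonlast.
move: pos_neq (ltn_ord ((pi^-1)%g u)) (ltn_ord ((pi^-1)%g v)); lia.
Qed.

Lemma card_precedes_nonlastC u v :
  #|[set pi | precedes_nonlast pi u v]| = #|[set pi | precedes_nonlast pi v u]|.
Proof.
(* Right multiplication by the transposition exchanges the values u and v. *)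
suff card_le : forall u' v', #|[set pi | precedes_nonlast pi u' v']|
                              <= #|[set pi | precedes_nonlast pi v' u']|.
  by apply/eqP; rewrite eqn_leq !card_le.
move=> u' v'; rewrite -(card_imset _ (mulIg (tperm u' v'))).
apply/subset_leq_card/subsetP => sigma /imsetP [pi]; rewrite inE => pi_uv ->.
by rewrite inE /precedes_nonlast invMg tpermV !permM tpermL tpermR.
Qed.

End PrecedesNonlast.

Arguments precedes_nonlast {n}.

Lemma card_perm_at n (x v : 'I_n) : #|[set pi : 'S_n | pi x == v]| = n.-1`!.
Proof.
have card_le w w' : #|[set pi : 'S_n | pi x == w]| <= #|[set pi : 'S_n | pi x == w']|.
  rewrite -(card_imset _ (mulIg (tperm w w'))).
  apply/subset_leq_card/subsetP => sigma /imsetP [pi]; rewrite inE => /eqP pi_x ->.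
  by rewrite inE permM pi_x tpermL.
have fiber_eq w : #|[set pi : 'S_n | pi x == w]| = #|[set pi : 'S_n | pi x == v]|.
  by apply/eqP; rewrite eqn_leq !card_le.
have : n`! = n * #|[set pi : 'S_n | pi x == v]|.
  rewrite -[n in n * _]card_ord -sum_nat_const -card_Sn -[LHS]sum1_card.
  rewrite (partition_big (fun pi : 'S_n => pi x) predT) //=.
  apply: eq_bigr => w _.
  by rewrite -(fiber_eq w) -sum1_card; apply: eq_bigl => pi; rewrite inE.
case: n x v {fiber_eq card_le} => [[]//|n] x v.
by rewrite factS => /eqP; rewrite eqn_pmul2l // => /eqP <-.
Qed.

Lemma double_card_precedes_nonlast n (u v : 'I_n.+1) : u != v ->
  2 * #|[set pi : 'S_n.+1 | precedes_nonlast pi u v]| = n.+1`! - 2 * n`!.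
Proof.
move=> neq_uv; set A := [set pi | precedes_nonlast pi u v].
set B := [set pi : 'S_n.+1 | precedes_nonlast pi v u].
set C := [set pi : 'S_n.+1 | (pi ord_max != u) && (pi ord_max != v)].
have AUB : A :|: B = C.
  by apply/setP => pi; rewrite !inE precedes_nonlast_total.
have AIB : A :&: B = set0.
  apply/setP => pi; rewrite !inE.
  by case: (boolP (precedes_nonlast pi u v)) => // /precedes_nonlast_asym /negbTE.
have card_C : #|C| = 2 * #|A|.
  by rewrite -AUB cardsU AIB cards0 subn0 -card_precedes_nonlastC addnn mul2n.
have card_notC : #|~: C| = 2 * n`!.
  have -> : ~: C = [set pi : 'S_n.+1 | pi ord_max == u] :|: [set pi : 'S_n.+1 | pi ord_max == v].
    by apply/setP => pi; rewrite !inE negb_and !negbK.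
  rewrite cardsU !card_perm_at (_ : _ :&: _ = set0) ?cards0 ?subn0 ?addnn ?mul2n //.
  by apply/setP => pi; rewrite !inE; apply/negP => /andP [/eqP -> ]; apply/negP.
by rewrite -card_C -card_notC -card_Sn -(cardsC C) addnK.
Qed.

Section Characterization.

Variables (n : nat) (pi : 'S_n.+2).
Local Notation one := (inord 1 : 'I_n.+2).

Lemma bivinc_occ_pat123 (f : {ffun 'I_3 -> 'I_n.+2}) :
  bivinc_occ pi pat123 set0 pat_Y f -> precedes_nonlast pi ord0 one.
Proof.
rewrite /bivinc_occ /ext_seq enum_ord3 /= => /and4P [f_incr f_pat _ f_Y].
have lt01 : (ord0 : 'I_3) < (inord 1 : 'I_3) by rewrite inordK.
have lt12 : (inord 1 : 'I_3) < (inord 2 : 'I_3) by rewrite !inordK.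
have f01 := implyP (forallP (forallP f_incr _) _) lt01.
have f12 := implyP (forallP (forallP f_incr _) _) lt12.
have pi01 := eqP (forallP (forallP f_pat ord0) (inord 1)).
have pi12 := eqP (forallP (forallP f_pat (inord 1)) (inord 2)).
rewrite /pat123 !perm1 lt01 in pi01; rewrite /pat123 !perm1 lt12 in pi12.
rewrite sorted_sort in f_Y; last 2 first.
- exact: leq_trans.
- by rewrite /= !ltnS (ltnW pi01) (ltnW pi12).
(* Y = {0, 1} forces the two smallest pattern values to be 0 and 1. *)
have [val0] := eqP (implyP (forallP f_Y ord0) (setU11 _ _)).
have := eqP (implyP (forallP f_Y (inord 1)) (setU1r _ (set11 _))).
rewrite inordK //= val0 => -[val1].
have -> : ord0 = pi (f ord0) by apply: val_inj.
have -> : one = pi (f (inord 1)) by apply: val_inj; rewrite /= inordK.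
rewrite /precedes_nonlast !permK f01 /=.
by move: f12 (ltn_ord (f (inord 2))); lia.
Qed.

Lemma contains_pat123_of_precedes :
  precedes_nonlast pi ord0 one -> contains_bivinc pi pat123 set0 pat_Y.
Proof.
move=> /andP [lt_p0_p1 lt_p1_last].
set p0 := (pi^-1)%g ord0; set p1 := (pi^-1)%g one.
have pi_p0 : pi p0 = ord0 by rewrite permKV.
have pi_p1 : pi p1 = one by rewrite permKV.
have pi_last : 1 < pi ord_max.
  have neq_p0 : ord_max != p0 by rewrite -val_eqE /= gtn_eqF ?(ltn_trans lt_p0_p1).
  have neq_p1 : ord_max != p1 by rewrite -val_eqE /= gtn_eqF.
  rewrite -(inj_eq (@perm_inj _ pi)) pi_p0 -val_eqE /= in neq_p0.
  rewrite -(inj_eq (@perm_inj _ pi)) pi_p1 -val_eqE /= inordK // in neq_p1.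
  by move: neq_p0 neq_p1; case: (nat_of_ord (pi ord_max)) => [|[|]].
pose f := [ffun a : 'I_3 => if val a == 0 then p0 else if val a == 1 then p1 else ord_max].
apply/existsP; exists f; rewrite /bivinc_occ /ext_seq enum_ord3 /=.
apply/and4P; split.
- apply/forallP => -[[|[|[|a]]] Ha] //; apply/forallP => -[[|[|[|b]]] Hb] //;
    by rewrite !ffunE //= ?(ltn_trans lt_p0_p1).
- apply/forallP => -[[|[|[|a]]] Ha] //; apply/forallP => -[[|[|[|b]]] Hb] //;
    rewrite /pat123 !perm1 !ffunE /= ?pi_p0 ?pi_p1 ?inordK //=; lia.
- by apply/forallP => x; rewrite in_set0.
- rewrite !ffunE /= !inordK //= pi_p0 pi_p1 /= inordK // ltnS (ltnW pi_last).
  by apply/forallP => y; apply/implyP; rewrite !inE => /orP [] /eqP -> //; rewrite inordK.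
Qed.

Lemma contains_pat123E :
  contains_bivinc pi pat123 set0 pat_Y = precedes_nonlast pi ord0 one.
Proof.
apply/idP/idP; last exact: contains_pat123_of_precedes.
by case/existsP => f; apply: bivinc_occ_pat123.
Qed.

End Characterization.

Theorem mainTheorem12 (n : nat) (hn : 2 <= n) :
  2 * b_count n = (n.-1)`! * (n - 2).
Proof.
case: n hn => [|[|n]] // _.
have -> : b_count n.+2 = #|[set pi : 'S_n.+2 | precedes_nonlast pi ord0 (inord 1)]|.
  by apply: eq_card => pi; rewrite !inE contains_pat123E.
rewrite double_card_precedes_nonlast; last by rewrite -val_eqE /= inordK.
by rewrite subn2 factS; move: (n.+1)`! => k; rewrite !mulSn [k * n]mulnC; lia.
Qed.
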